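(* Let $m\ge3$ be a fixed integer and let $S$ be a monoid such that (i) $S$ satisfies $x^{m-2}\,y_1\cdots y_n\,x\,y_n\cdots y_1\,x\approx x^{m-1}\,y_1\cdots y_n\,x\,y_n\cdots y_1\,x$ for each $n>1$; (ii) the words $xyyx$ and $x^{m-1}$ are isoterms for $S$; (iii) the word $x^{m-2}t_1xt_2x$ is an isoterm for $S$; (iv) if $S$ satisfies an identity $\mathbf u\approx x^{m-2}yxyx$ where $x$ occurs exactly $m$ times in $\mathbf u$, then $\mathbf u=x^{m-2}yxyx$. Then $S$ is non-finitely based.
   Context: All letters denote distinct variables of a countably infinite alphabet; words are elements of the free semigroup on it. A monoid $S$ satisfies an identity $\mathbf u\approx\mathbf v$ if both sides are equal under every evaluation of the variables in $S$. A word $\mathbf w$ is an isoterm for $S$ if $S$ satisfies no identity $\mathbf w\approx\mathbf w'$ with $\mathbf w'\ne\mathbf w$. $S$ is finitely based if all its identities are derivable from a finite subset of them; otherwise non-finitely based. *)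

From mathcomp Require Import all_boot.
Set Implicit Arguments. Unset Strict Implicit. Unset Printing Implicit Defensive.

Definition word := seq nat.
Definition identity := (word * word)%type.

Record monoid := Monoid {
  carrier :> Type;
  mul : carrier -> carrier -> carrier;
  one : carrier;
  mulA : forall a b c, mul a (mul b c) = mul (mul a b) c;
  mul1m : forall a, mul one a = a;
  mulm1 : forall a, mul a one = a }.

Definition eval (S : monoid) (phi : nat -> S) (w : word) : S :=
  foldr (fun x acc => mul (phi x) acc) (one S) w.

Definition satisfies (S : monoid) (u v : word) : Prop :=
  forall phi : nat -> S, eval phi u = eval phi v.

Definition isoterm (S : monoid) (w : word) : Prop :=
  forall w' : word, satisfies S w w' -> w' = w.

(* Substitution of words for variables (monoid signature: may erase letters). *)
Definition subst (theta : nat -> word) (w : word) : word :=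
  flatten (map theta w).

Inductive derivable (Sigma : seq identity) : word -> word -> Prop :=
  | der_refl u : derivable Sigma u u
  | der_sym u v : derivable Sigma u v -> derivable Sigma v u
  | der_trans u v w : derivable Sigma u v -> derivable Sigma v w ->
      derivable Sigma u w
  | der_step (p q : word) (theta : nat -> word) (a b : word) :
      (p, q) \in Sigma ->
      derivable Sigma (a ++ subst theta p ++ b) (a ++ subst theta q ++ b).

Definition finitely_based (S : monoid) : Prop :=
  exists Sigma : seq identity,
    (forall e, e \in Sigma -> satisfies S e.1 e.2) /\
    (forall u v : word, satisfies S u v -> derivable Sigma u v).

Definition vx : nat := 0.
Definition vy : nat := 1.
Definition vt1 : nat := 1.
Definition vt2 : nat := 2.
Definition ys (n : nat) : word := iota 1 n.

(* Let u_n = x^(m-2) y_1 ... y_n x y_n ... y_1 x; by (i), S satisfies an identity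
   between u_n and a word with m+1 occurrences of x.  If every identity of a basis has
   length < n, each derivation step a theta(p) b -> a theta(q) b preserves
   "S satisfies u_n ~ w and x occurs m times in w", so the basis cannot derive (i).
   A letter of p occurring fewer than m times keeps its multiplicity by the isoterm
   x^(m-1).  A letter u occurring at least m times with x in theta(u) occurs exactly
   m times, and erasing everything but x and y_i, (iv) shows that the letters of p
   touching x or y_i read u^(m-2) c u c' u.  If c <> c', the isoterm x^(m-2) t1 x t2 x
   transfers the m occurrences of u to q.  If c = c' for every i, then as |p| < n two
   of the y_i lie in theta(c) for one c occurring twice in p; erasing all but these two
   turns u_n into xyyx and w into a square, contradicting the isoterm xyyx. *)

From Pilot Require Import Defs.
From mathcomp Require Import all_boot zify.
Set Implicit Arguments. Unset Strict Implicit. Unset Printing Implicit Defensive.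

Lemma subst_cons g a s : subst g (a :: s) = g a ++ subst g s.
Proof. by []. Qed.

Lemma subst_cat g s t : subst g (s ++ t) = subst g s ++ subst g t.
Proof. by rewrite /subst map_cat flatten_cat. Qed.

Lemma subst_comp g h s : subst h (subst g s) = subst (fun l => subst h (g l)) s.
Proof. by elim: s => //= a s IH; rewrite !subst_cons subst_cat IH. Qed.

Section Satisfaction.

Variable S : monoid.

Lemma eval_cat (phi : nat -> S) s t : eval phi (s ++ t) = Defs.mul (eval phi s) (eval phi t).
Proof. by elim: s => [|a s IH] /=; rewrite ?mul1m // IH mulA. Qed.

Lemma eval_subst (phi : nat -> S) g s : eval phi (subst g s) = eval (fun l => eval phi (g l)) s.
Proof. by elim: s => //= a s IH; rewrite subst_cons eval_cat IH. Qed.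

Lemma satisfies_subst p q g : satisfies S p q -> satisfies S (subst g p) (subst g q).
Proof. by move=> Hpq phi; rewrite !eval_subst. Qed.

Lemma satisfies_context p q a b : satisfies S p q -> satisfies S (a ++ p ++ b) (a ++ q ++ b).
Proof. by move=> Hpq phi; rewrite !eval_cat Hpq. Qed.

Lemma satisfies_sym p q : satisfies S p q -> satisfies S q p.
Proof. by move=> Hpq phi; rewrite Hpq. Qed.

Lemma satisfies_trans p q r : satisfies S p q -> satisfies S q r -> satisfies S p r.
Proof. by move=> Hpq Hqr phi; rewrite Hpq Hqr. Qed.

End Satisfaction.

Lemma mem_subst g c s : (c \in subst g s) = has (fun l => c \in g l) s.
Proof. by elim: s => //= a s IH; rewrite subst_cons mem_cat IH. Qed.

Lemma subst_nseq g k l : subst g (nseq k l) = flatten (nseq k (g l)).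
Proof. by elim: k => //= k IH; rewrite subst_cons IH. Qed.

Lemma eq_in_subst (g g' : nat -> word) s : {in s, g =1 g'} -> subst g s = subst g' s.
Proof. by move=> /eq_in_map Egg'; rewrite /subst Egg'. Qed.

Lemma subst_filter g (P : pred nat) s :
  (forall l, ~~ P l -> g l = [::]) -> subst g (filter P s) = subst g s.
Proof.
by move=> gP; elim: s => //= a s IH; case: ifPn => [_|/gP]; rewrite !subst_cons IH // => ->.
Qed.

Lemma subst_single g c s : {in s, forall l, l != c -> g l = [::]} ->
  subst g s = flatten (nseq (count_mem c s) (g c)).
Proof.
elim: s => //= a s IH gs; rewrite subst_cons IH => [|l ls]; last by apply: gs; rewrite inE ls orbT.
by case: eqP => [->|/eqP ac] //=; rewrite gs ?mem_head.
Qed.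

Lemma count_subst_split c g u s :
  count_mem c (subst g s) =
  count_mem u s * count_mem c (g u) + count_mem c (subst g (filter (predC1 u) s)).
Proof.
elim: s => //= a s IH; rewrite subst_cons count_cat IH.
case: eqP => [->|_] /=; first by rewrite mulnDl mul1n addnA.
by rewrite subst_cons count_cat add0n addnCA.
Qed.

Lemma count_mem_filter (P : pred nat) (c : nat) s : count_mem c (filter P s) = P c * count_mem c s.
Proof.
rewrite count_filter; case Pc: (P c); rewrite ?mul1n ?mul0n.
- by apply: eq_count => z /=; case: eqP => // ->.
- by rewrite (eq_count (a2 := pred0)) ?count_pred0 // => z /=; case: eqP => // ->.
Qed.

Lemma perm_filter_count (P : pred nat) (s t : word) :
  (forall l, P l -> count_mem l s = count_mem l t) -> perm_eq (filter P s) (filter P t).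
Proof.
move=> Est; apply/allP => l _; apply/eqP; rewrite !count_mem_filter.
by have [/Est -> | _] := boolP (P l).
Qed.

Lemma count_subst_eq (c : nat) (g : nat -> word) (p q : word) :
  (forall l, c \in g l -> count_mem l p = count_mem l q) ->
  count_mem c (subst g p) = count_mem c (subst g q).
Proof.
move=> Epq; pose P l := c \in g l.
have count_subst_filter s : count_mem c (subst g s) = count_mem c (subst g (filter P s)).
  elim: s => //= a s IH; case: ifPn => [_|/count_memPn ca].
  - by rewrite !subst_cons !count_cat IH.
  - by rewrite subst_cons count_cat ca IH.
have Eperm : perm_eq (subst g (filter P p)) (subst g (filter P q)).
  apply: perm_flatten; apply: perm_map; apply: perm_filter_count => l Pl.
  exact: Epq Pl.
move/permP: Eperm => Eperm.
by rewrite (count_subst_filter p) (count_subst_filter q) Eperm.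
Qed.

Definition restrict (xs : seq nat) (l : nat) : word :=
  if l \in xs then [:: index l xs] else [::].

Lemma subst_restrict xs s : subst (restrict xs) s = [seq index l xs | l <- s & l \in xs].
Proof. by elim: s => //= l s IH; rewrite subst_cons IH /restrict; case: ifP. Qed.

Lemma count_restrict xs l s : l \in xs ->
  count_mem (index l xs) (subst (restrict xs) s) = count_mem l s.
Proof.
move=> lxs; rewrite subst_restrict count_map count_filter.
apply: eq_count => z /=; rewrite /preim /=.
have [zxs | zxs] := boolP (z \in xs); last by rewrite andbF; case: eqP zxs => // ->; rewrite lxs.
rewrite andbT; apply/eqP/eqP => [|-> //].
by move/(congr1 (nth 0 xs)); rewrite !nth_index.
Qed.

Lemma index_y i : 0 < i -> index i [:: vx; i] = 1.
Proof. by move=> i0; rewrite /= eq_sym (gtn_eqF i0) eqxx. Qed.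

Lemma restrict_notin xs s : ~~ has (mem xs) s -> subst (restrict xs) s = [::].
Proof. by rewrite has_filter negbK subst_restrict => /eqP ->. Qed.

Lemma filter_iota_sorted xs a n : sorted ltn xs ->
  [seq l <- iota a n | l \in xs] = [seq l <- xs | a <= l < a + n].
Proof.
move=> sxs; apply: (irr_sorted_eq ltn_trans ltnn).
- exact/(sorted_filter ltn_trans)/iota_ltn_sorted.
- exact: (sorted_filter ltn_trans).
by move=> l; rewrite !mem_filter mem_iota andbC.
Qed.

Lemma restrict1 r s : subst (restrict [:: r]) s = nseq (count_mem r s) vx.
Proof.
elim: s => //= l s IH; rewrite subst_cons IH /restrict inE.
by case: eqP => [->|] //=; rewrite eqxx.
Qed.

Lemma isoterm_nseq_count (S : monoid) k p q r :
  isoterm S (nseq k vx) -> satisfies S p q -> count_mem r p <= k ->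
  count_mem r q = count_mem r p.
Proof.
move=> iso Hpq rk.
have := satisfies_subst (restrict [:: r]) Hpq.
move/(satisfies_context (nseq (k - count_mem r p) vx) [::]).
rewrite !restrict1 !cats0 -!nseqD subnK // => /iso /(congr1 size).
rewrite !size_nseq; lia.
Qed.

Lemma prefix_notin (c : nat) s t r : c \notin s -> s ++ t = c :: r -> s = [::].
Proof. by case: s => //= a s; rewrite inE => /norP [ca _] [ac _]; rewrite ac eqxx in ca. Qed.

Lemma suffix_notin (c : nat) s t r : c \notin s -> t ++ s = rcons r c -> s = [::].
Proof.
case/lastP: s => //= s a; rewrite mem_rcons inE => /norP [ca _].
by rewrite -rcons_cat => /rcons_inj [_ ac]; rewrite ac eqxx in ca.
Qed.

Section Shape.

Variables (h : nat -> word) (u : nat).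
Hypothesis hu : h u = [:: 0].

Let fits l := ((l == u) || (0 \notin h l)) && (h l != [::]).

Lemma subst_cons_head0 l s r : fits l -> subst h (l :: s) = 0 :: r -> l = u /\ subst h s = r.
Proof.
rewrite /fits; case: eqP => [-> _|_ /=]; first by rewrite subst_cons hu => -[].
case E: (h l) => [|a t] //; rewrite subst_cons E inE andbT => /norP [a0 _] [a0'].
by rewrite a0' eqxx in a0.
Qed.

Lemma subst_cons_head1 l s r : fits l -> subst h (l :: s) = 1 :: 0 :: r ->
  h l = [:: 1] /\ subst h s = 0 :: r.
Proof.
rewrite /fits; case: eqP => [-> _|_ /=]; first by rewrite subst_cons hu.
case E: (h l) => [|a t] //; rewrite subst_cons E inE andbT => /norP [_ t0] /= [-> Et].
have t_nil := prefix_notin t0 Et.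
by rewrite t_nil in Et *.
Qed.

Lemma subst_shape_fits k s : all fits s ->
  subst h s = nseq k 0 ++ [:: 1; 0; 1; 0] ->
  exists c1 c2, [/\ s = nseq k u ++ [:: c1; u; c2; u], h c1 = [:: 1] & h c2 = [:: 1]].
Proof.
elim: k s => [|k IH] [|l s] //= /andP [fl fs] E; last first.
  have [-> E'] := subst_cons_head0 fl E.
  by have [c1 [c2 [-> *]]] := IH s fs E'; exists c1, c2.
have [h1] := subst_cons_head1 fl E; clear E.
case: s fs => // l2 s /andP [f2 fs] /(subst_cons_head0 f2) [->].
case: s fs => // l3 s /andP [f3 fs] /(subst_cons_head1 f3) [h3].
case: s fs => // l4 s /andP [f4 fs] /(subst_cons_head0 f4) [->].
case: s fs => [_ _|l5 s]; first by exists l, l3.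
by rewrite subst_cons => /andP [/andP [_]]; case: (h l5).
Qed.

Lemma subst_shape k p : all (fun l => (l == u) || (0 \notin h l)) p ->
  subst h p = nseq k 0 ++ [:: 1; 0; 1; 0] ->
  exists c1 c2, [/\ [seq l <- p | h l != [::]] = nseq k u ++ [:: c1; u; c2; u],
                    h c1 = [:: 1] & h c2 = [:: 1]].
Proof.
move=> hp E; apply: subst_shape_fits.
  rewrite all_filter; apply/allP => l lp; apply/implyP => nl.
  by rewrite /fits nl andbT (allP hp).
by rewrite subst_filter // => l /negPn /eqP.
Qed.

End Shape.

Lemma pigeonhole_iota (T : eqType) (s : seq T) (P : nat -> pred T) a n :
  size s < n -> (forall i, a <= i < a + n -> has (P i) s) ->
  exists i j c, [/\ a <= i < j, j < a + n, c \in s, P i c & P j c].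
Proof.
case: s => [|x0 s'] sn Phas.
  by have := Phas a; rewrite leqnn -{1}[a]addn0 ltn_add2l sn => /(_ isT).
set s := x0 :: s' in sn Phas *.
pose f i := nth x0 s (find (P i) s).
have f_in i : a <= i < a + n -> f i \in s /\ P i (f i).
  by move=> /Phas si; rewrite mem_nth -?has_find // nth_find.
have : ~~ uniq (map f (iota a n)).
  have sub : {subset map f (iota a n) <= s}.
    by move=> x /mapP [i]; rewrite mem_iota => /f_in [fi _] ->.
  apply: contraTN sn => /uniq_leq_size /(_ sub).
  by rewrite size_map size_iota -leqNgt.
case/(uniqPn x0) => i0 [j0]; rewrite size_map size_iota => -[ij jn].
rewrite !(nth_map 0) ?size_iota ?(ltn_trans ij) // !nth_iota ?(ltn_trans ij) // => Ef.
have [fi Pi] := f_in (a + i0) ltac:(lia).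
have [_ Pj] := f_in (a + j0) ltac:(lia).
by exists (a + i0), (a + j0), (f (a + i0)); split => //; [lia | lia | rewrite Ef].
Qed.

Lemma flatten_nseq1 k (l : nat) : flatten (nseq k [:: l]) = nseq k l.
Proof. by elim: k => //= k ->. Qed.

Lemma isoterm_xt_count (S : monoid) k p q (P : pred nat) u c1 c2 :
  isoterm S (nseq k vx ++ [:: vt1; vx; vt2; vx]) -> satisfies S p q ->
  uniq [:: u; c1; c2] -> all P [:: u; c1; c2] ->
  filter P p = nseq k u ++ [:: c1; u; c2; u] -> count_mem u q = k.+2.
Proof.
move=> iso Hpq U Pxs Ep; set xs := [:: u; c1; c2].
move: U; rewrite /= !inE negb_or andbT => /andP [/andP [uc1 uc2] c12].
have restrict_xs l : ~~ P l -> restrict xs l = [::].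
  by move=> Pl; rewrite /restrict ifN //; apply: contra Pl => /(allP Pxs).
have Ep' : subst (restrict xs) p = nseq k vx ++ [:: vt1; vx; vt2; vx].
  rewrite -(subst_filter _ restrict_xs) Ep subst_cat subst_nseq !subst_cons /restrict /=.
  rewrite !inE !eqxx (eq_sym c1) (eq_sym c2) (negbTE uc1) (negbTE uc2) (negbTE c12) /=.
  by rewrite orbT flatten_nseq1.
have := satisfies_subst (restrict xs) Hpq; rewrite Ep' => /iso Eq.
have := count_restrict q (mem_head u [:: c1; c2]); rewrite -/xs /= eqxx Eq => <-.
by rewrite count_cat count_nseq /= addn2 mul1n.
Qed.

Lemma count_x_un k n :
  count_mem vx (nseq k vx ++ ys n ++ [:: vx] ++ rev (ys n) ++ [:: vx]) = k.+2.
Proof.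
have /count_memPn y0 : vx \notin ys n by rewrite mem_iota.
by rewrite !count_cat count_rev y0 count_nseq /= mul1n addn2.
Qed.

Section NonFinitelyBased.

Variables (m : nat) (S : monoid).
Hypothesis m_ge3 : 3 <= m.
Hypothesis iso_xyyx : isoterm S [:: vx; vy; vy; vx].
Hypothesis iso_xpow : isoterm S (nseq (m - 1) vx).
Hypothesis iso_xt : isoterm S (nseq (m - 2) vx ++ [:: vt1; vx; vt2; vx]).
Hypothesis xyxy_rigid : forall u : word,
  satisfies S u (nseq (m - 2) vx ++ [:: vy; vx; vy; vx]) -> count_mem vx u = m ->
  u = nseq (m - 2) vx ++ [:: vy; vx; vy; vx].

Variable n : nat.

Definition un : word := nseq (m - 2) vx ++ ys n ++ [:: vx] ++ rev (ys n) ++ [:: vx].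

Definition un_invariant (w : word) := satisfies S un w /\ count_mem vx w = m.

Lemma un_restrict_xy i : 0 < i <= n ->
  subst (restrict [:: vx; i]) un = nseq (m - 2) vx ++ [:: vy; vx; vy; vx].
Proof.
move=> /andP [i0 iN].
rewrite subst_restrict /un !filter_cat filter_rev /ys filter_iota_sorted /=; last by rewrite andbT.
by rewrite i0 ltnS iN filter_nseq mem_head mul1n map_cat map_nseq /= eq_sym (gtn_eqF i0) eqxx.
Qed.

Lemma un_restrict_yy i j : 0 < i -> i < j -> j <= n ->
  subst (restrict [:: i; j]) un = [:: vx; vy; vy; vx].
Proof.
move=> i0 ij jn; have j0 := ltn_trans i0 ij.
rewrite subst_restrict /un !filter_cat filter_rev /ys filter_iota_sorted /=; last by rewrite ij.
rewrite i0 j0 !ltnS jn (leq_trans (ltnW ij) jn) filter_nseq !inE (ltn_eqF i0) (ltn_eqF j0) /=.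
by rewrite !eqxx (ltn_eqF ij).
Qed.

Lemma un_invariant_restrict_xy w i : un_invariant w -> 0 < i <= n ->
  subst (restrict [:: vx; i]) w = nseq (m - 2) vx ++ [:: vy; vx; vy; vx].
Proof.
move=> [Hw cw] hi; apply: xyxy_rigid; last by rewrite (count_restrict _ (mem_head vx [:: i])).
by rewrite -(un_restrict_xy hi); apply/satisfies_sym/satisfies_subst.
Qed.

Lemma un_invariant_restrict_yy w i j : un_invariant w -> 0 < i -> i < j -> j <= n ->
  subst (restrict [:: i; j]) w = [:: vx; vy; vy; vx].
Proof.
move=> [Hw _] i0 ij jn; apply: iso_xyyx.
by rewrite -(un_restrict_yy i0 ij jn); apply: satisfies_subst.
Qed.

Section Factorization.

Variables (p q a b : word) (theta : nat -> word).
Hypothesis Hpq : satisfies S p q.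
Hypothesis Hw : un_invariant (a ++ subst theta p ++ b).

Lemma double_carrier_false i j c : 0 < i -> i < j -> j <= n ->
  ~~ has (mem [:: i; j]) (a ++ b) -> count_mem c p = 2 ->
  {in p, forall l, l != c -> ~~ has (mem [:: i; j]) (theta l)} -> False.
Proof.
move=> i0 ij jn; rewrite has_cat negb_or => /andP [ya yb] c2 y_other.
have := un_invariant_restrict_yy Hw i0 ij jn.
rewrite !subst_cat (restrict_notin ya) (restrict_notin yb) subst_comp.
rewrite (subst_single (c := c)) => [|l lp lc]; last exact: restrict_notin (y_other l lp lc).
rewrite c2 /= cats0.
case: (subst (restrict [:: i; j]) (theta c)) => [|x1 [|x2 [|x3 t]]] //=; first by case=> -> ->.
by move/(congr1 size); rewrite /= size_cat /=; lia.
Qed.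

Section HeavyVariable.

Variable u : nat.
Hypothesis u_heavy : m <= count_mem u p.
Hypothesis x_in_u : vx \in theta u.

Lemma x_occurrences : [/\ count_mem u p = m, count_mem vx (theta u) = 1,
  vx \notin a, vx \notin b & {in p, forall l, l != u -> vx \notin theta l}].
Proof.
have := Hw.2; rewrite !count_cat (count_subst_split _ _ u).
have := x_in_u; rewrite -has_pred1 has_count.
set cu := count_mem u p; set cx := count_mem vx (theta u).
set r := count_mem vx (subst theta _) => cx0 Ecount.
have [-> -> r0 a0 b0] : [/\ cu = m, cx = 1, r = 0, count_mem vx a = 0 & count_mem vx b = 0].
  by move: u_heavy; rewrite -/cu; clearbody cu cx r; split; nia.
split=> //; try exact/count_memPn.
move=> l lp lu; move/count_memPn: r0; rewrite mem_subst => /hasPn; apply.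
by rewrite mem_filter /= lu.
Qed.

Let proj i l := subst (restrict [:: vx; i]) (theta l).

Lemma projection_xy i : 0 < i <= n ->
  [/\ subst (restrict [:: vx; i]) a = [::], subst (restrict [:: vx; i]) b = [::]
    & subst (proj i) p = nseq (m - 2) vx ++ [:: vy; vx; vy; vx]].
Proof.
move=> hi; have [_ _ xa xb _] := x_occurrences.
have x_free s : vx \notin s -> vx \notin subst (restrict [:: vx; i]) s.
  by move/count_memPn => xs; apply/count_memPn; rewrite (count_restrict _ (mem_head vx [:: i])).
set X := nseq (m - 2) vx ++ [:: vy; vx; vy; vx].
have X_head : X = vx :: nseq (m - 3) vx ++ [:: vy; vx; vy; vx].
  by rewrite /X (_ : m - 2 = (m - 3).+1) //; lia.
have X_last : X = rcons (nseq (m - 2) vx ++ [:: vy; vx; vy]) vx by rewrite -cats1 -catA.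
have := un_invariant_restrict_xy Hw hi; rewrite !subst_cat subst_comp => E.
have ra := prefix_notin (x_free a xa) (etrans E X_head); rewrite ra /= in E.
have rb := suffix_notin (x_free b xb) (etrans E X_last); rewrite rb cats0 in E.
by [].
Qed.

Lemma proj_heavy i : 0 < i <= n -> proj i u = [:: vx].
Proof.
move=> hi; have [i0 _] := andP hi.
have [cu cx _ _ _] := x_occurrences; have [_ _ Ep] := projection_xy hi.
have i_in : i \in [:: vx; i] by rewrite !inE eqxx orbT.
(* y_i occurs twice in the projection of theta(p), but u occurs m >= 3 times. *)
have /count_memPn iu : count_mem i (theta u) = 0.
  have := congr1 (count_mem 1) Ep; rewrite count_cat count_nseq /=.
  have := count_restrict (theta u) i_in; rewrite index_y // => Ecount.
  rewrite (count_subst_split _ _ u) cu Ecount; move: (count_mem i _) (count_mem 1 _) => c r; nia.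
rewrite /proj (eq_in_subst (g' := restrict [:: vx])) ?restrict1 ?cx // => l lu.
have li : l != i by apply: contraNneq iu => <-.
by rewrite /restrict !inE (negbTE li) orbF; case: eqP => [->|].
Qed.

Lemma y_carrier i : count_mem u q != m -> 0 < i <= n ->
  exists c, [/\ c \in p, i \in theta c, count_mem c p = 2, i \notin a ++ b
              & {in p, forall l, i \in theta l -> l = c}].
Proof.
move=> qm hi; have [i0 _] := andP hi.
have [_ _ _ _ x_other] := x_occurrences; have [ra rb Ep] := projection_xy hi.
have hu := proj_heavy hi.
have y_free s : subst (restrict [:: vx; i]) s = [::] -> i \notin s.
  move=> rs; apply/count_memPn.
  by rewrite -(count_restrict s (mem_last vx [:: i])) index_y // rs.
have y_in l : (i \in theta l) = (1 \in proj i l).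
  have := count_restrict (theta l) (mem_last vx [:: i]); rewrite index_y // => Ecount.
  by rewrite -!has_pred1 !has_count Ecount.
have fits : all (fun l => (l == u) || (0 \notin proj i l)) p.
  apply/allP => l lp; case: eqVneq => //= lu; apply/count_memPn.
  by rewrite (count_restrict _ (mem_head vx [:: i])); apply/count_memPn/x_other.
have [c1 [c2 [Ep' h1 h2]]] := subst_shape hu fits Ep.
have cu c : proj i c = [:: 1] -> c != u by move=> hc; apply/eqP => cu; rewrite cu hu in hc.
have [E12 | c12] := eqVneq c1 c2; last first.
  have := isoterm_xt_count iso_xt Hpq _ _ Ep'.
  rewrite /= !inE negb_or !(eq_sym u) (cu c1 h1) (cu c2 h2) c12 hu h1 h2 => /(_ isT isT) Eq.
  by rewrite Eq in qm; move: qm; rewrite (_ : (m - 2).+2 = m) ?eqxx //; lia.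
rewrite -E12 {c2 E12 h2} in Ep'.
have c1p : c1 \in p.
  have : c1 \in [seq l <- p | proj i l != [::]] by rewrite Ep' mem_cat !inE eqxx !orbT.
  by rewrite mem_filter => /andP [].
exists c1; split => //.
- by rewrite y_in h1 mem_head.
- have := congr1 (count_mem c1) Ep'; rewrite count_mem_filter h1 mul1n => ->.
  by rewrite count_cat count_nseq /= (eq_sym u) (negbTE (cu c1 h1)) eqxx.
- by rewrite mem_cat negb_or !y_free.
move=> l lp; rewrite y_in => y_l.
have : l \in [seq l <- p | proj i l != [::]] by rewrite mem_filter lp; case: (proj i l) y_l.
rewrite Ep' mem_cat mem_nseq !inE; have [lu | _] := eqVneq l u; first by rewrite lu hu in y_l.
by rewrite andbF /= orbF orbb => /eqP.
Qed.

Lemma heavy_count_preserved : size p < n -> count_mem u q = m.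
Proof.
move=> sp; apply/eqP/negPn/negP => qm.
have y_has i : 1 <= i < 1 + n -> has (fun l => i \in theta l) p.
  by rewrite ltnS => /(y_carrier qm) [c [cp ic _ _ _]]; apply/hasP; exists c.
have [i [j [c [/andP [i0 ij] jn cp ic jc]]]] := pigeonhole_iota sp y_has.
rewrite ltnS in jn.
have hi : 0 < i <= n by rewrite i0 (leq_trans (ltnW ij) jn).
have hj : 0 < j <= n by rewrite (ltn_trans i0 ij) jn.
have [ci [_ _ c2 iab Ui]] := y_carrier qm hi.
have [cj [_ _ _ jab Uj]] := y_carrier qm hj.
have Eci := Ui c cp ic; have Ecj := Uj c cp jc; subst ci cj.
apply: (double_carrier_false i0 ij jn _ c2) => [|l lp lc].
  by rewrite has_sym /= orbF negb_or iab jab.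
rewrite has_sym /= orbF negb_or.
by apply/andP; split; apply: contra lc => yl; apply/eqP; [apply: Ui | apply: Uj].
Qed.

End HeavyVariable.

Lemma un_invariant_step : size p < n -> un_invariant (a ++ subst theta q ++ b).
Proof.
move=> sp; split.
  exact: satisfies_trans Hw.1 (satisfies_context a b (satisfies_subst theta Hpq)).
rewrite -Hw.2 !count_cat (count_subst_eq (p := q) (q := p)) // => l xl.
have [small | big] := leqP (count_mem l p) (m - 1).
  exact: isoterm_nseq_count iso_xpow Hpq small.
have heavy : m <= count_mem l p by lia.
by have [-> _ _ _ _] := x_occurrences heavy xl; apply: heavy_count_preserved.
Qed.

End Factorization.

Lemma un_invariant_derivable Sigma :
  (forall e, e \in Sigma -> satisfies S e.1 e.2) ->
  (forall e, e \in Sigma -> size e.1 < n /\ size e.2 < n) ->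
  forall v w, derivable Sigma v w -> un_invariant v <-> un_invariant w.
Proof.
move=> HS Hsize v w; elim=> {v w} [v | v w _ IH | v w z _ IH1 _ IH2 | p q th a b e_in].
- by [].
- exact: iff_sym IH.
- exact: iff_trans IH1 IH2.
have [sp sq] := Hsize _ e_in; have Hpq := HS _ e_in.
split=> Hw; first exact: un_invariant_step Hpq Hw sp.
exact: un_invariant_step (satisfies_sym Hpq) Hw sq.
Qed.

End NonFinitelyBased.

Theorem theorem6p3 (m : nat) (S : monoid) :
  3 <= m ->
  (forall n, 1 < n ->
     satisfies S (nseq (m - 2) vx ++ ys n ++ [:: vx] ++ rev (ys n) ++ [:: vx])
                 (nseq (m - 1) vx ++ ys n ++ [:: vx] ++ rev (ys n) ++ [:: vx])) ->
  isoterm S [:: vx; vy; vy; vx] ->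
  isoterm S (nseq (m - 1) vx) ->
  isoterm S (nseq (m - 2) vx ++ [:: vt1; vx; vt2; vx]) ->
  (forall u : word,
     satisfies S u (nseq (m - 2) vx ++ [:: vy; vx; vy; vx]) ->
     count_mem vx u = m ->
     u = nseq (m - 2) vx ++ [:: vy; vx; vy; vx]) ->
  ~ finitely_based S.
Proof.
move=> m3 Hi iso2 isom iso3 Hiv [Sigma [HS Hder]].
pose N := (\max_(e <- Sigma) (size e.1 + size e.2)).+2.
have Hsize e : e \in Sigma -> size e.1 < N /\ size e.2 < N.
  move=> e_in; have lt_e : size e.1 + size e.2 < N by rewrite ltnS leqW //; exact: leq_bigmax_seq.
  by split; apply: leq_ltn_trans lt_e; [apply: leq_addr | apply: leq_addl].
have [un_to _] := un_invariant_derivable m3 iso2 isom iso3 Hiv HS Hsize (Hder _ _ (Hi N isT)).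
have un_ok : un_invariant m S N (un m N) by split=> //; rewrite count_x_un; lia.
by have [_] := un_to un_ok; rewrite count_x_un; lia.
Qed.
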